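(* Let $\rho$ be a geometric Nielsen 1-chain and $\mathbf p\colon p_0,\dots,p_m$ an edge-path in $T_\rho$ with $p_0=p_m$. If $\mathbf p$ admits an orientation, then $(-1)^{\sigma(\mathbf p)}=1$.
   Context: Setup: $\mathbb F$ finitely generated free, $\Gamma$ finite connected graph with $\pi_1(\Gamma)\cong\mathbb F$, $H\subset\Gamma$ a subgraph, $f$ a homotopy equivalence with $f(H)\subseteq H$ and fixed lift $\tilde f$ to the universal cover $\widetilde\Gamma$, $\widetilde H$ the preimage of $H$. 1-chains $x=\sum_ex_ee$ (reversing orientation negates the coefficient), $\mathrm{supp}(x)=\{e:x_e\ne0\}$; $\pi_H^\perp$ sets coefficients on edges of $\widetilde H$ to $0$; $[u,v]$ is the 1-chain of the reduced edge-path from $u$ to $v$. A geometric Nielsen 1-chain is $\rho=\pi_H^\perp([u,v])$ with $\tilde f(u)=u,\tilde f(v)=v$ satisfying (GNC1) for distinct $g_1,g_2$, $\mathrm{supp}(g_1\rho)\cap\mathrm{supp}(g_2\rho)$ is empty or one edge; (GNC2) each edge $e\notin\widetilde H$ lies in $\mathrm{supp}(g\rho)$ for exactly two $g$, and is the unique common edge of those two supports; (GNC3) some non-commuting $g_1,g_2$ have $\mathrm{supp}(\rho)\cap\mathrm{supp}(g_i\rho)\neq\emptyset$. $T_\rho$: vertex set $\mathbb F$, edge between distinct $g_1,g_2$ iff their translates' supports intersect. For an edge-path $\mathbf p\colon p_0,\dots,p_m$ in $T_\rho$ with $g_j=p_j$ and $e_j$ the unique edge of $\mathrm{supp}(g_{j-1}\rho)\cap\mathrm{supp}(g_j\rho)$,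 $\sigma(\mathbf p)$ is the number of $1\le j\le m$ with $(g_{j-1}\rho)_{e_j}=(g_j\rho)_{e_j}$ (independent of orientation of $e_j$). For closed paths (indices mod $m$), an orientation is a choice for each index $j$ of an orientation of $e_j$ (independent across indices) with $(g_j\rho)_{e_j}=-(g_j\rho)_{e_{j+1}}$ for all $j$. *)

From mathcomp Require Import all_boot all_order all_algebra.
Set Implicit Arguments. Unset Strict Implicit. Unset Printing Implicit Defensive.
Import GRing.Theory.
Local Open Scope ring_scope.

(* The universal cover of a finite connected graph Gamma with pi_1 = F,      *)
(* together with the deck action of F.  Equivalently: a group F acting       *)
(* freely and cocompactly on a tree, preserving the (lifted) orientation of  *)
(* edges.  Every edge [e : E] has a reference orientation src e -> tgt e;    *)
(* an oriented edge is a pair (e, b), b = true meaning the reference         *)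
(* orientation.                                                               *)

Definition oedge (E : Type) := (E * bool)%type.

Section Paths.
Variables (V E : eqType) (src tgt : E -> V).

Definition osrc (x : oedge E) : V := if x.2 then src x.1 else tgt x.1.
Definition otgt (x : oedge E) : V := if x.2 then tgt x.1 else src x.1.

Fixpoint is_epath (u : V) (p : seq (oedge E)) (v : V) : bool :=
  match p with
  | [::] => u == v
  | x :: p' => (osrc x == u) && is_epath (otgt x) p' v
  end.

Fixpoint reduced (p : seq (oedge E)) : bool :=
  match p with
  | x :: ((y :: _) as p') => ~~ ((x.1 == y.1) && (x.2 != y.2)) && reduced p'
  | _ => true
  end.

Definition reduced_path (u : V) (p : seq (oedge E)) (v : V) : Prop :=
  is_epath u p v /\ reduced p.

Definition chain_of (p : seq (oedge E)) (e : E) : int :=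
  \sum_(x <- p | x.1 == e) (if x.2 then 1 else -1).
End Paths.

Record TreeAction := {
  grp : eqType;
  gmul : grp -> grp -> grp;
  ginv : grp -> grp;
  gone : grp;
  gmulA : forall a b c, gmul a (gmul b c) = gmul (gmul a b) c;
  gmul1 : forall a, gmul gone a = a;
  gmulV : forall a, gmul (ginv a) a = gone;
  vert : eqType;
  edge : eqType;
  esrc : edge -> vert;
  etgt : edge -> vert;
  tree_exists : forall u v : vert, exists p, reduced_path esrc etgt u p v;
  tree_unique : forall (u v : vert) p q,
      reduced_path esrc etgt u p v -> reduced_path esrc etgt u q v -> p = q;
  actV : grp -> vert -> vert;
  actE : grp -> edge -> edge;
  actV1 : forall x, actV gone x = x;
  actVM : forall a b x, actV (gmul a b) x = actV a (actV b x);
  actE1 : forall e, actE gone e = e;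
  actEM : forall a b e, actE (gmul a b) e = actE a (actE b e);
  act_src : forall a e, esrc (actE a e) = actV a (esrc e);
  act_tgt : forall a e, etgt (actE a e) = actV a (etgt e);
  act_free : forall a x, actV a x = x -> a = gone;
  cocompactV : exists s : seq vert, forall x, exists a, exists2 y, y \in s & x = actV a y;
  cocompactE : exists s : seq edge, forall e, exists a, exists2 d, d \in s & e = actE a d
}.

Section Chains.
Variable S : TreeAction.
Local Notation G := (grp S).
Local Notation E := (edge S).

Definition chain := E -> int.

Definition ocoef (x : chain) (e : E) (b : bool) : int := if b then x e else - x e.

Definition supp (x : chain) : pred E := fun e => x e != 0.

(* translate g x : (g x)_{g e} = x_e *)
Definition translate (g : G) (x : chain) : chain := fun e => x (@actE S (@ginv S g) e).

Definition proj_perp (He : pred E) (x : chain) : chain :=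
  fun e => if He e then 0 else x e.

Definition is_proj_geodesic_chain (He : pred E) (rho : chain) (u v : vert S) : Prop :=
  exists p, reduced_path (@esrc S) (@etgt S) u p v /\
            rho = proj_perp He (chain_of p).

Definition GNC1 (rho : chain) : Prop :=
  forall g1 g2 : G, g1 <> g2 -> forall e1 e2 : E,
    supp (translate g1 rho) e1 -> supp (translate g2 rho) e1 ->
    supp (translate g1 rho) e2 -> supp (translate g2 rho) e2 -> e1 = e2.

Definition GNC2 (He : pred E) (rho : chain) : Prop :=
  forall e : E, ~~ He e ->
    exists g1 g2 : G, [/\ g1 <> g2,
      supp (translate g1 rho) e, supp (translate g2 rho) e,
      (forall g, supp (translate g rho) e -> g = g1 \/ g = g2) &
      (forall e', supp (translate g1 rho) e' -> supp (translate g2 rho) e' -> e' = e)].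

Definition GNC3 (rho : chain) : Prop :=
  exists g1 g2 : G, @gmul S g1 g2 <> @gmul S g2 g1 /\
    (exists e, supp rho e /\ supp (translate g1 rho) e) /\
    (exists e, supp rho e /\ supp (translate g2 rho) e).

(* The lift ft of a homotopy equivalence f : Gamma -> Gamma with f(H) <= H:
   ft is equivariant w.r.t. an automorphism phi of F, maps the preimage of H
   into itself (edges of H are sent to paths in H). *)
Definition lift_htpy_equiv (Hv : pred (vert S)) (He : pred E)
    (ft : vert S -> vert S) : Prop :=
  (exists phi : G -> G,
      [/\ forall a b, phi (@gmul S a b) = @gmul S (phi a) (phi b),
          bijective phi &
          forall a x, ft (@actV S a x) = @actV S (phi a) (ft x)]) /\
  (forall x, Hv x -> Hv (ft x)) /\
  (forall e, He e -> forall p,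
      reduced_path (@esrc S) (@etgt S) (ft (@esrc S e)) p (ft (@etgt S e)) ->
      all (fun y => He y.1) p).

(* H is a subgraph of Gamma; its preimage is a G-invariant subgraph *)
Definition invariant_subgraph (Hv : pred (vert S)) (He : pred E) : Prop :=
  [/\ forall e, He e -> Hv (@esrc S e) /\ Hv (@etgt S e),
      forall a x, Hv x -> Hv (@actV S a x) &
      forall a e, He e -> He (@actE S a e)].

Definition geometric_Nielsen_chain (Hv : pred (vert S)) (He : pred E)
    (ft : vert S -> vert S) (rho : chain) : Prop :=
  exists u v, [/\ ft u = u, ft v = v & is_proj_geodesic_chain He rho u v] /\
              [/\ GNC1 rho, GNC2 He rho & GNC3 rho].

Definition Tadj (rho : chain) (g1 g2 : G) : Prop :=
  g1 <> g2 /\ exists e, supp (translate g1 rho) e /\ supp (translate g2 rho) e.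

(* p_0, ..., p_m is an edge path in T_rho, and ee j (1 <= j <= m) is the
   (unique, by GNC1) common edge e_j of supp(p_{j-1} rho) and supp(p_j rho) *)
Definition Tpath (rho : chain) (p : nat -> G) (m : nat) (ee : nat -> E) : Prop :=
  forall j, (1 <= j <= m)%N ->
    Tadj rho (p j.-1) (p j) /\
    supp (translate (p j.-1) rho) (ee j) /\ supp (translate (p j) rho) (ee j).

Definition sigma (rho : chain) (p : nat -> G) (m : nat) (ee : nat -> E) : nat :=
  count (fun j => translate (p j.-1) rho (ee j) == translate (p j) rho (ee j))
        (iota 1 m).

(* successor of an index modulo m, indices taken in 1..m *)
Definition nextidx (m j : nat) : nat := if j == m then 1%N else j.+1.

(* o j is the chosen orientation of e_j; (g_j rho)_{e_j} = -(g_j rho)_{e_{j+1}} *)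
Definition is_orientation (rho : chain) (p : nat -> G) (m : nat) (ee : nat -> E)
    (o : nat -> bool) : Prop :=
  forall j, (1 <= j <= m)%N ->
    ocoef (translate (p j) rho) (ee j) (o j) =
    - ocoef (translate (p j) rho) (ee (nextidx m j)) (o (nextidx m j)).

End Chains.

From mathcomp Require Import all_boot all_order all_algebra.
Import GRing.Theory.
Local Open Scope ring_scope.

(* 1. In a tree every reduced closed edge-path is empty; hence a reduced path
      crosses each edge at most once, so [u,v], its projection rho and all the
      translates g rho have coefficients in {0, 1, -1}.
   2. Put T_j = (p_{j-1} rho)_{e_j} measured along the chosen orientation o_j
      of e_j.  For coefficients +-1, the j-th crossing counts in sigma iff
      (p_{j-1} rho)_{e_j} (p_j rho)_{e_j} = 1, so its sign contribution is
      -(p_{j-1} rho)_{e_j} (p_j rho)_{e_j}; the orientation condition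
      rewrites this as T_j T_{j+1} (indices mod m, using p_0 = p_m).
   3. Reindexing the product along the cyclic shift j -> j+1 gives
      (-1)^sigma = prod_j T_j T_{j+1} = prod_j T_j^2 = 1.
   Only the description rho = pi_H^perp([u,v]) is used. *)

Set Implicit Arguments. Unset Strict Implicit.

Section TreePaths.
Variable S : TreeAction.
Local Notation E := (edge S).
Local Notation V := (vert S).
Local Notation epath := (is_epath (@esrc S) (@etgt S)).
Local Notation rpath := (reduced_path (@esrc S) (@etgt S)).
Local Notation osrc := (osrc (@esrc S) (@etgt S)).
Local Notation otgt := (otgt (@esrc S) (@etgt S)).

Lemma epath_cat (u v : V) (p1 p2 : seq (oedge E)) :
  epath u (p1 ++ p2) v -> exists w, epath u p1 w /\ epath w p2 v.
Proof.
elim: p1 u => [|x p1 IH] u /=; first by exists u.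
by case/andP=> -> /IH [w [H1 H2]]; exists w.
Qed.

Lemma reduced_prefix (p1 p2 : seq (oedge E)) : reduced (p1 ++ p2) -> reduced p1.
Proof. by elim: p1 => [|x [|y p1] IH] //= /andP [-> /IH]. Qed.

Lemma reduced_tail (x : oedge E) (p : seq (oedge E)) : reduced (x :: p) -> reduced p.
Proof. by case: p => //= y p /andP []. Qed.

Lemma reduced_loop_nil (u : V) (p : seq (oedge E)) : rpath u p u -> p = [::].
Proof. by move=> Hp; apply: (tree_unique Hp (conj (eqxx u) isT : rpath u [::] u)). Qed.

Lemma reduced_path_uniq (u v : V) (p : seq (oedge E)) :
  rpath u p v -> uniq (map fst p).
Proof.
elim: p u => [|x q IH] u //= [/andP [_ Hq] Hred].
have Hrq := reduced_tail Hred.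
rewrite (IH (otgt x)) ?andbT; last by split.
apply/mapP => -[[e b] eb_q /= xe]; subst e.
move: Hq Hred Hrq; case/splitPr: eb_q => q1 q2.
move=> /epath_cat [w [Hq1 /= /andP [/eqP Hyw _]]] Hred Hrq.
have [same | opposite] : b = x.2 \/ b = ~~ x.2.
  by case: (b); case: (x.2); [left | right | right | left].
- (* same direction: x :: q1 is a nonempty reduced loop at osrc x *)
  subst b; rewrite -Hyw -surjective_pairing in Hq1.
  have Hloop : rpath (osrc x) (x :: q1) (osrc x).
    by split; [rewrite /= eqxx | exact: (@reduced_prefix (x :: q1) _ Hred)].
  by have := reduced_loop_nil Hloop.
- (* opposite direction: q1 is a loop at otgt x, so x is followed by its reverse *)
  subst b; have Ew : w = otgt x by rewrite -Hyw /osrc /otgt /=; case: (x.2).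
  rewrite Ew in Hq1.
  have Hq1nil : q1 = [::].
    by apply: (@reduced_loop_nil (otgt x)); split; last exact: (@reduced_prefix q1 _ Hrq).
  by move: Hred; rewrite Hq1nil /= eqxx; case: (x.2).
Qed.

End TreePaths.

Definition unit_or_zero (z : int) : bool := z \in [:: 0; 1; -1].

Lemma chain_of_unit_or_zero (E : eqType) (p : seq (oedge E)) (e : E) :
  uniq (map fst p) -> unit_or_zero (chain_of p e).
Proof.
rewrite /chain_of; elim: p => [|x p IH] /=; first by rewrite big_nil.
case/andP=> Hx /IH Hp; rewrite big_cons; case: eqP => // Hxe.
rewrite big_seq_cond big1 ?addr0; first by case: (x.2).
move=> y /andP [yp /eqP Hye]; move: Hx.
by rewrite Hxe -Hye (map_f fst yp).
Qed.

Section NielsenChains.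
Variable S : TreeAction.
Local Notation G := (grp S).
Local Notation E := (edge S).

Lemma translate_unit_or_zero (He : pred E) (rho : chain S) (u v : vert S) :
  is_proj_geodesic_chain He rho u v ->
  forall (g : G) (e : E), unit_or_zero (translate g rho e).
Proof.
move=> [q [Hq ->]] g e; rewrite /translate /proj_perp.
case: (He _); first by [].
exact/chain_of_unit_or_zero/(reduced_path_uniq Hq).
Qed.

End NielsenChains.

Lemma unit_or_zero_sqr (z : int) : unit_or_zero z -> z != 0 -> z * z = 1.
Proof. by rewrite /unit_or_zero !inE => /or3P [] /eqP ->. Qed.

Lemma crossing_contribution (S : TreeAction) (x y : chain S) (e : edge S) (o : bool) :
  unit_or_zero (x e) -> unit_or_zero (y e) -> supp x e -> supp y e ->
  (if x e == y e then -1 else 1) = - (ocoef x e o * ocoef y e o).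
Proof.
rewrite /unit_or_zero /supp /ocoef !inE; case: o => /=;
  by move=> /or3P [] /eqP -> /or3P [] /eqP ->.
Qed.

Lemma sign_count (R : pzRingType) (T : Type) (P : pred T) (s : seq T) :
  (-1 : R) ^+ count P s = \prod_(j <- s) (if P j then -1 else 1).
Proof.
elim: s => [|x s IH] /=; first by rewrite big_nil.
by rewrite big_cons -IH; case: (P x); rewrite ?add0n ?exprS ?mul1r.
Qed.

Lemma map_nextidx (m : nat) : map (nextidx m) (iota 1 m) = rot 1 (iota 1 m).
Proof.
case: m => [|k] //.
have split_last : iota 1 k.+1 = iota 1 k ++ [:: k.+1] by rewrite -(addn1 k) iotaD add1n addn1.
rewrite {1}split_last map_cat /= /nextidx eqxx rot1_cons -cats1.
congr (_ ++ _); rewrite -[2%N]/(1 + 1)%N iotaDl; apply/eq_in_map => j.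
by rewrite mem_iota add1n => /andP [_ Hj]; rewrite ltn_eqF.
Qed.

Lemma big_nextidx (R : Type) (idx : R) (op : Monoid.com_law idx)
    (F : nat -> R) (m : nat) :
  \big[op/idx]_(j <- iota 1 m) F (nextidx m j) = \big[op/idx]_(j <- iota 1 m) F j.
Proof. by rewrite -(big_map (nextidx m) predT) map_nextidx; apply: perm_big; rewrite perm_rot. Qed.

Section OrientedClosedPath.
Variables (S : TreeAction) (rho : chain S) (p : nat -> grp S) (m : nat)
  (ee : nat -> edge S) (o : nat -> bool).
Hypotheses (rho_units : forall g e, unit_or_zero (translate g rho e))
  (path_rho : Tpath rho p m ee) (closed_p : p 0%N = p m)
  (oriented : is_orientation rho p m ee o).

Definition oriented_coef (j : nat) : int := ocoef (translate (p j.-1) rho) (ee j) (o j).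

(* Closedness of the path: the group element before index j+1 is p_j. *)
Lemma p_pred_nextidx (j : nat) : (1 <= j <= m)%N -> p (nextidx m j).-1 = p j.
Proof. by rewrite /nextidx; case: eqP => // ->. Qed.

Lemma crossing_sign (j : nat) : (1 <= j <= m)%N ->
  (if translate (p j.-1) rho (ee j) == translate (p j) rho (ee j) then -1 else 1)
  = oriented_coef j * oriented_coef (nextidx m j).
Proof.
move=> Hj; have [_ [in_prev in_cur]] := path_rho Hj.
rewrite (crossing_contribution (o j) (rho_units _ _) (rho_units _ _) in_prev in_cur).
rewrite /oriented_coef p_pred_nextidx //.
by rewrite -[ocoef _ (ee (nextidx m j)) _]opprK -oriented // mulrN.
Qed.

Lemma oriented_coef_sqr (j : nat) : (1 <= j <= m)%N -> oriented_coef j * oriented_coef j = 1.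
Proof.
move=> Hj; have [_ [in_prev _]] := path_rho Hj.
by rewrite /oriented_coef /ocoef; case: (o j); rewrite ?mulrNN unit_or_zero_sqr.
Qed.

Lemma oriented_sigma_even : (-1 : int) ^+ sigma rho p m ee = 1.
Proof.
have in_range j : j \in iota 1 m -> (1 <= j <= m)%N by rewrite mem_iota add1n ltnS.
rewrite /sigma sign_count (eq_big_seq _ (fun j Hj => crossing_sign (in_range j Hj))).
rewrite big_split /= big_nextidx -big_split /=.
by rewrite big_seq big1 // => j /in_range /oriented_coef_sqr.
Qed.

End OrientedClosedPath.

Theorem lemma5p5 (S : TreeAction)
    (Hv : pred (vert S)) (He : pred (edge S)) (ft : vert S -> vert S)
    (rho : chain S) (p : nat -> grp S) (m : nat) (ee : nat -> edge S) :
  invariant_subgraph Hv He ->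
  lift_htpy_equiv Hv He ft ->
  geometric_Nielsen_chain Hv He ft rho ->
  Tpath rho p m ee ->
  p 0%N = p m ->
  (exists o : nat -> bool, is_orientation rho p m ee o) ->
  (-1 : int) ^+ sigma rho p m ee = 1.
Proof.
move=> _ _ [u [v [[_ _ geodesic] _]]] path_rho closed_p [o oriented].
exact: oriented_sigma_even (translate_unit_or_zero geodesic) path_rho closed_p oriented.
Qed.
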